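(* Let $f:\mathbb{C}^2\to M_2(\mathbb{C})$ be the unital C*-algebra embedding $f(a,b)=\begin{pmatrix}a&0\\0&b\end{pmatrix}$, and let $\sigma:\mathrm{Max}\,\mathbb{C}^2\to\mathcal{T}(\mathbb{C}^2)$ be the quotient map $M\mapsto 1\cdot M\cdot 1$ (sending a closed subspace to the closed two-sided ideal it generates). Then the pushout of $\mathrm{Max}\,f:\mathrm{Max}\,\mathbb{C}^2\to\mathrm{Max}\,M_2(\mathbb{C})$ and $\sigma$ in the category of quantales and quantale homomorphisms is the trivial quantale.
   Context: A quantale is a complete lattice with an associative multiplication $\cdot$ distributing over arbitrary joins in both variables; a quantale homomorphism preserves arbitrary joins and multiplication; a quantale is trivial if its bottom equals its top. For a unital C*-algebra $A$, $\mathrm{Max}\,A$ is the quantale of closed linear subspaces of $A$ with join the closure of the sum and product $M\cdot N$ the closure of the linear span of $\{ab:a\in M,b\in N\}$; its top $1$ is $A$. For a unital *-homomorphism $f:A\to B$, $\mathrm{Max}\,f(M)=\overline{f[M]}$. $\mathcal{T}(\mathbb{C}^2)$ is the locale of closed ideals of $\mathbb{C}^2$. *)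

From HB Require Import structures.
From mathcomp Require Import all_boot all_order all_algebra all_field.
From mathcomp Require Import complex.
From mathcomp Require Import reals Rstruct.
Import GRing.Theory.
Local Open Scope ring_scope.

Record qstruct := QStruct {
  qcar :> Type;
  qle : qcar -> qcar -> Prop;
  qmul : qcar -> qcar -> qcar
}.

Definition is_lub (Q : qstruct) (S : Q -> Prop) (x : Q) : Prop :=
  (forall y, S y -> qle Q y x) /\
  (forall z, (forall y, S y -> qle Q y z) -> qle Q x z).

Definition is_quantale (Q : qstruct) : Prop :=
  (forall x : Q, qle Q x x) /\
  (forall x y z : Q, qle Q x y -> qle Q y z -> qle Q x z) /\
  (forall x y : Q, qle Q x y -> qle Q y x -> x = y) /\
  (forall S : Q -> Prop, exists x, is_lub Q S x) /\
  (forall x y z : Q, qmul Q x (qmul Q y z) = qmul Q (qmul Q x y) z) /\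
  (forall (a : Q) (S : Q -> Prop) (x : Q), is_lub Q S x ->
     is_lub Q (fun y => exists s, S s /\ y = qmul Q a s) (qmul Q a x)) /\
  (forall (a : Q) (S : Q -> Prop) (x : Q), is_lub Q S x ->
     is_lub Q (fun y => exists s, S s /\ y = qmul Q s a) (qmul Q x a)).

Definition is_qhom (P Q : qstruct) (h : P -> Q) : Prop :=
  (forall (S : P -> Prop) (x : P), is_lub P S x ->
     is_lub Q (fun y => exists s, S s /\ y = h s) (h x)) /\
  (forall x y : P, h (qmul P x y) = qmul Q (h x) (h y)).

Definition is_trivial_quantale (Q : qstruct) : Prop :=
  exists bot top : Q,
    is_lub Q (fun _ => False) bot /\ is_lub Q (fun _ => True) top /\ bot = top.

Definition is_qpushout (A B C : qstruct) (f : A -> B) (g : A -> C)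
    (P : qstruct) (i1 : B -> P) (i2 : C -> P) : Prop :=
  is_quantale P /\ is_qhom B P i1 /\ is_qhom C P i2 /\
  (forall a, i1 (f a) = i2 (g a)) /\
  (forall (Q : qstruct) (q1 : B -> Q) (q2 : C -> Q),
     is_quantale Q -> is_qhom B Q q1 -> is_qhom C Q q2 ->
     (forall a, q1 (f a) = q2 (g a)) ->
     exists u : P -> Q,
       is_qhom P Q u /\ (forall b, u (i1 b) = q1 b) /\ (forall c, u (i2 c) = q2 c) /\
       (forall u' : P -> Q,
          is_qhom P Q u' -> (forall b, u' (i1 b) = q1 b) ->
          (forall c, u' (i2 c) = q2 c) -> forall x, u' x = u x)).

Definition unitQ : qstruct := QStruct unit (fun _ _ => True) (fun _ _ => tt).

(* Max A for a finite-dimensional algebra A: all subspaces are closed, the   *)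
(* closure of a sum is the sum, and the product is the span of products,     *)
(* i.e. MathComp's (U * V)%VS.                                               *)

Set Implicit Arguments.
Unset Strict Implicit.
Unset Printing Implicit Defensive.

Definition MaxQ (K : fieldType) (A : falgType K) : qstruct :=
  QStruct {vspace A} (fun U V => (U <= V)%VS) (fun U V => (U * V)%VS).

Definition Maxmap (K : fieldType) (A B : falgType K) (f : 'Hom(A, B))
    (U : {vspace A}) : {vspace B} := (f @: U)%VS.

Definition is_ideal (K : fieldType) (A : falgType K) (I : {vspace A}) : bool :=
  ((fullv * I <= I) && (I * fullv <= I))%VS.

Lemma is_ideal_mul (K : fieldType) (A : falgType K) (I J : {vspace A}) :
  is_ideal I -> is_ideal J -> is_ideal (I * J)%VS.
Proof.
move=> /andP[I1 I2] /andP[J1 J2]; apply/andP; split.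
  by rewrite prodvA; apply: prodvSl.
by rewrite -prodvA; apply: prodvSr.
Qed.

Lemma is_ideal_sigma (K : fieldType) (A : falgType K) (M : {vspace A}) :
  is_ideal (fullv * M * fullv)%VS.
Proof.
apply/andP; split.
  by rewrite !prodvA; do 2 apply: prodvSl; exact: subvf.
by rewrite -!prodvA; do 2 apply: prodvSr; exact: subvf.
Qed.

Definition idealT (K : fieldType) (A : falgType K) :=
  {I : {vspace A} | is_ideal I}.

Definition idealT_mul (K : fieldType) (A : falgType K) (I J : idealT A) : idealT A :=
  exist _ (proj1_sig I * proj1_sig J)%VS
    (is_ideal_mul (proj2_sig I) (proj2_sig J)).

Definition TQ (K : fieldType) (A : falgType K) : qstruct :=
  QStruct (idealT A) (fun I J => (proj1_sig I <= proj1_sig J)%VS) (@idealT_mul K A).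

(* sigma : Max A -> T(A), M |-> 1 . M . 1 (1 = top of Max A = A) *)
Definition sigmaT (K : fieldType) (A : falgType K) (M : {vspace A}) : idealT A :=
  exist _ (fullv * M * fullv)%VS (is_ideal_sigma M).

Definition Cx := complex Rdefinitions.R.

HB.instance Definition _ := GRing.Lalgebra_isComAlgebra.Build Cx (Cx^o * Cx^o)%type.
HB.instance Definition _ := Algebra_isFalgebra.Build Cx (Cx^o * Cx^o)%type.

Definition C2 : falgType (Cx : fieldType) := (Cx^o * Cx^o)%type.
Definition M2 : falgType (Cx : fieldType) := 'M[Cx]_2.

Definition fdiag_fun (x : C2) : M2 :=
  \matrix_(i < 2, j < 2)
    (if i == j then (if i == 0 :> nat then (x.1 : Cx) else (x.2 : Cx)) else 0).

Definition fdiag : 'Hom(C2, M2) := linfun fdiag_fun.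

From HB Require Import structures.
From mathcomp Require Import all_boot all_algebra all_field complex Rstruct.
Import GRing.Theory.
Local Open Scope ring_scope.

(* In a cocone (Q, q1, q2) over the span, q1 <[f v]> = q2 (sigma <[v]>) lies
   below q2 (sigma 1) = q1 1 for every v in C^2.  A diagonal matrix unit
   e = E_ii factors as e = a e b with a b = 0, so
   q1 <[e]> = q1 <[a]> q1 <[e]> q1 <[b]> <= q1 <[a]> q1 1 q1 <[b]> = q1 <[a b]> = q1 0.
   Since E_11 + E_22 = 1, also q1 1 <= q1 0, which makes q1 and q2 constant at
   the bottom q1 0.  So every cocone factors uniquely through the one-point
   quantale, and a pushout P is a single point: the identity of P and the
   constant endomorphism both factor its own cocone. *)

Lemma is_lub_pair {P : qstruct} {x y : P} :
  qle P y y -> qle P x y -> is_lub P (fun z => z = x \/ z = y) y.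
Proof. by move=> yy xy; split=> [z [->|->] //|z ub]; apply: ub; right. Qed.

Lemma lub0_le {P : qstruct} (z w : P) : is_lub P (fun _ => False) z -> qle P z w.
Proof. by case=> _; apply. Qed.

Section QuantaleOrder.
Variable Q : qstruct.
Hypothesis hQ : is_quantale Q.

Lemma qle_refl x : qle Q x x.
Proof. by case: hQ. Qed.

Lemma qle_trans y x z : qle Q x y -> qle Q y z -> qle Q x z.
Proof. by case: hQ => _ [+ _]; apply. Qed.

Lemma qle_anti x y : qle Q x y -> qle Q y x -> x = y.
Proof. by case: hQ => _ [_ [+ _]]; apply. Qed.

Lemma qmul_monor a x y : qle Q x y -> qle Q (qmul Q a x) (qmul Q a y).
Proof.
move=> xy; case: hQ => _ [_ [_ [_ [_ [distr _]]]]].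
have [ub _] := distr a _ _ (is_lub_pair (qle_refl y) xy).
by apply: ub; exists x; split=> //; left.
Qed.

Lemma qmul_monol a x y : qle Q x y -> qle Q (qmul Q x a) (qmul Q y a).
Proof.
move=> xy; case: hQ => _ [_ [_ [_ [_ [_ distl]]]]].
have [ub _] := distl a _ _ (is_lub_pair (qle_refl y) xy).
by apply: ub; exists x; split=> //; left.
Qed.

End QuantaleOrder.
Arguments qle_trans {Q} hQ y {x z}.
Arguments qle_anti {Q} hQ {x y}.
Arguments qmul_monor {Q} hQ a {x y}.
Arguments qmul_monol {Q} hQ a {x y}.

Section QuantaleHom.
Variables (P Q : qstruct) (h : P -> Q).

Lemma qhomM : is_qhom P Q h -> forall x y, h (qmul P x y) = qmul Q (h x) (h y).
Proof. by case. Qed.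

Lemma qhom_lub0 x :
  is_qhom P Q h -> is_lub P (fun _ => False) x -> is_lub Q (fun _ => False) (h x).
Proof.
move=> [hlub _] /hlub [_ least]; split=> // w _.
by apply: least => y [s []].
Qed.

Lemma qhom_mono : is_qhom P Q h -> (forall x, qle P x x) ->
  forall x y, qle P x y -> qle Q (h x) (h y).
Proof.
move=> [hlub _] refl x y xy.
have [ub _] := hlub _ _ (is_lub_pair (refl y) xy).
by apply: ub; exists x; split=> //; left.
Qed.

End QuantaleHom.
Arguments qhomM {P Q h}.
Arguments qhom_lub0 {P Q h x}.
Arguments qhom_mono {P Q h}.

Lemma id_qhom (P : qstruct) : is_qhom P P id.
Proof.
split=> // S x [ub least]; split=> [z [y [Sy ->]]|w ubw]; first exact: ub.
by apply: least => y Sy; apply: ubw; exists y.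
Qed.

Lemma const_qhom (P Q : qstruct) (z : Q) :
  is_lub Q (fun _ => False) z -> qmul Q z z = z -> is_qhom P Q (fun _ => z).
Proof.
move=> zbot zz; split=> // S x _.
by split=> [y [s [_ ->]]|w _]; apply: lub0_le zbot.
Qed.

Lemma unitQ_quantale : is_quantale unitQ.
Proof. by do !split=> //; [case=> -[] | move=> S; exists tt]. Qed.

Section CollapsingSpan.
Variables (A B C : qstruct) (f : A -> B) (g : A -> C) (b0 : B).

Definition span_collapses_to : Prop :=
  forall (Q : qstruct) (q1 : B -> Q) (q2 : C -> Q),
    is_quantale Q -> is_qhom B Q q1 -> is_qhom C Q q2 ->
    (forall a, q1 (f a) = q2 (g a)) ->
    (forall b, q1 b = q1 b0) /\ (forall c, q2 c = q1 b0).

Hypothesis b0_bot : is_lub B (fun _ => False) b0.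
Hypothesis collapse : span_collapses_to.

Lemma cocone_const_qhom (R : qstruct) {Q : qstruct} {q1 : B -> Q} {q2 : C -> Q} :
  is_quantale Q -> is_qhom B Q q1 -> is_qhom C Q q2 ->
  (forall a, q1 (f a) = q2 (g a)) -> is_qhom R Q (fun _ => q1 b0).
Proof.
move=> hQ h1 h2 hc; have [q1_const _] := collapse _ _ _ hQ h1 h2 hc.
apply: const_qhom; first exact: qhom_lub0 h1 b0_bot.
by rewrite -qhomM.
Qed.

Lemma unitQ_qpushout : is_qpushout A B C f g unitQ (fun _ => tt) (fun _ => tt).
Proof.
split; first exact: unitQ_quantale.
do 3 split=> //.
move=> Q q1 q2 hQ h1 h2 hc; have [q1_const q2_const] := collapse _ _ _ hQ h1 h2 hc.
exists (fun _ => q1 b0); split; first exact: cocone_const_qhom _ hQ h1 h2 hc.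
split=> [b|]; first by rewrite q1_const.
split=> [c|u _ u_q1 _ []]; first by rewrite q2_const.
exact: u_q1.
Qed.

Lemma qpushout_trivial (P : qstruct) (i1 : B -> P) (i2 : C -> P) :
  is_qpushout A B C f g P i1 i2 -> is_trivial_quantale P.
Proof.
move=> [hP [h1 [h2 [hc universal]]]].
have [i1_const i2_const] := collapse _ _ _ hP h1 h2 hc.
have [u [_ [_ [_ u_unique]]]] := universal P i1 i2 hP h1 h2 hc.
have point x : x = i1 b0.
  have := u_unique id (id_qhom P) (fun _ => erefl) (fun _ => erefl) x.
  move=> ->; apply: esym; apply: u_unique (cocone_const_qhom P hP h1 h2 hc) _ _ x.
    by move=> b; rewrite i1_const.
  by move=> c; rewrite i2_const.
have [_ [_ [_ [lubs _]]]] := hP.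
have [bot bot_lub] := lubs (fun _ => False); have [top top_lub] := lubs (fun _ => True).
by exists bot, top; rewrite (point bot) (point top) in bot_lub top_lub *.
Qed.

End CollapsingSpan.
Arguments unitQ_qpushout {A B C f g b0}.
Arguments qpushout_trivial {A B C f g b0}.

Section MaxQuantale.
Variables (K : fieldType) (A : falgType K).

Lemma Max_lub0 : is_lub (MaxQ A) (fun _ => False) 0%VS.
Proof. by split=> // U _; exact: sub0v. Qed.

Lemma Max_lub_add (U V : {vspace A}) :
  is_lub (MaxQ A) (fun W => W = U \/ W = V) (U + V)%VS.
Proof.
split=> [W [->|->]|W ub]; [exact: addvSl | exact: addvSr |].
by rewrite /= subv_add; apply/andP; split; apply: ub; [left | right].
Qed.

Lemma sigmaT1_ge (I : idealT A) : qle (TQ A) I (sigmaT 1%VS).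
Proof. by rewrite /= prodv1 prodv_id subvf. Qed.

Lemma sigmaT0_le (I : idealT A) : qle (TQ A) (sigmaT 0%VS) I.
Proof. by rewrite /= prodv0 prod0v sub0v. Qed.

Lemma Maxmap_line (B : falgType K) (h : 'Hom(A, B)) (v : A) :
  Maxmap h <[v]>%VS = <[h v]>%VS.
Proof. exact: limg_line. Qed.

Section MaxHom.
Variables (Q : qstruct) (q : MaxQ A -> Q).
Hypotheses (hQ : is_quantale Q) (hq : is_qhom (MaxQ A) Q q).

Lemma qhom_Max_add_le (U V : {vspace A}) (w : Q) :
  qle Q (q U) w -> qle Q (q V) w -> qle Q (q (U + V)%VS) w.
Proof.
move=> Uw Vw; have [hlub _] := hq; have [_ least] := hlub _ _ (Max_lub_add U V).
by apply: least => _ [W [[->|->] ->]].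
Qed.

Lemma qhom_Max_line_le0 (a e b : A) : a * e * b = e -> a * b = 0 ->
  qle Q (q <[e]>%VS) (q 1%VS) -> qle Q (q <[e]>%VS) (q 0%VS).
Proof.
move=> aeb ab e_le1.
have -> : q <[e]>%VS = qmul Q (qmul Q (q <[a]>%VS) (q <[e]>%VS)) (q <[b]>%VS).
  by rewrite -!(qhomM hq) /= !prodv_line aeb.
have -> : q 0%VS = qmul Q (qmul Q (q <[a]>%VS) (q 1%VS)) (q <[b]>%VS).
  by rewrite -!(qhomM hq) /= prodv1 prodv_line ab.
by apply: qmul_monol => //; apply: qmul_monor.
Qed.

Lemma qhom_Max_const : qle Q (q 1%VS) (q 0%VS) -> forall U, q U = q 0%VS.
Proof.
move=> le10 U; apply: qle_anti => //; last first.
  by apply: qhom_mono hq _ _ _ (sub0v U) => V; exact: subvv.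
rewrite -[U]prod1v -[X in qle _ _ (q X)](prod0v U) !(qhomM hq).
exact: qmul_monol.
Qed.

End MaxHom.
End MaxQuantale.
Arguments Max_lub0 {K A}.
Arguments sigmaT1_ge {K A}.
Arguments sigmaT0_le {K A}.
Arguments qhom_Max_add_le {K A Q q} hq {U V w}.
Arguments qhom_Max_line_le0 {K A Q q}.
Arguments qhom_Max_const {K A Q q}.

Section DiagonalMatrixUnits.
Variables (R : pzRingType) (n : nat) (i j : 'I_n).

Lemma delta_mx_diag_annihilator :
  (delta_mx i i + delta_mx i j) *m (delta_mx i i - delta_mx j i) = 0 :> 'M[R]_n.
Proof.
rewrite mulmxDl !mulmxBr !mul_delta_mx_cond !eqxx !mulr1n [i == j]eq_sym.
by rewrite addrC addrA subrK subrr.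
Qed.

Lemma delta_mx_diag_factor : i != j ->
  (delta_mx i i + delta_mx i j) *m delta_mx i i *m (delta_mx i i - delta_mx j i)
    = delta_mx i i :> 'M[R]_n.
Proof.
move=> /negPf ij; rewrite mulmxDl !mul_delta_mx_cond eqxx eq_sym ij mulr0n addr0.
by rewrite mulmxBr !mul_delta_mx_cond eqxx ij mulr0n subr0.
Qed.

End DiagonalMatrixUnits.
Arguments delta_mx_diag_annihilator {R n i j}.
Arguments delta_mx_diag_factor {R n i j}.

Lemma fdiag_fun_is_linear : linear fdiag_fun.
Proof.
move=> c x y; apply/matrixP=> i j; rewrite !mxE.
by case: (i == j); case: (i == 0 :> nat); rewrite ?mulr0 ?addr0.
Qed.
HB.instance Definition _ :=
  GRing.isLinear.Build _ C2 M2 _ fdiag_fun fdiag_fun_is_linear.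

Lemma fdiag1 : fdiag 1 = 1.
Proof. by apply/matrixP=> -[[|[|//]] ?] -[[|[|//]] ?]; rewrite lfunE !mxE. Qed.

Lemma fdiag_delta_mx (i : 'I_2) : exists v : C2, fdiag v = delta_mx i i.
Proof.
exists (((i == 0 :> nat)%:R, (i == 1 :> nat)%:R) : Cx * Cx).
by case: i => -[|[|//]] ?; apply/matrixP=> -[[|[|//]] ?] -[[|[|//]] ?]; rewrite lfunE !mxE.
Qed.

Lemma M2_1_delta_mx : 1 = delta_mx 0 0 + delta_mx 1 1 :> M2.
Proof. by apply/(@matrixP _ 2 2)=> -[[|[|//]] ?] -[[|[|//]] ?]; rewrite !mxE /= ?addr0 ?add0r. Qed.

Section FdiagSigmaCocone.
Variables (Q : qstruct) (q1 : MaxQ M2 -> Q) (q2 : TQ C2 -> Q).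
Hypotheses (hQ : is_quantale Q) (h1 : is_qhom (MaxQ M2) Q q1)
  (h2 : is_qhom (TQ C2) Q q2) (hc : forall a, q1 (Maxmap fdiag a) = q2 (sigmaT a)).

Lemma q2_mono (I J : TQ C2) : qle (TQ C2) I J -> qle Q (q2 I) (q2 J).
Proof. by apply: qhom_mono h2 _ I J => K; exact: subvv. Qed.

Lemma q1_fdiag_le1 (v : C2) : qle Q (q1 <[fdiag v]>%VS) (q1 1%VS).
Proof. by rewrite -Maxmap_line hc -fdiag1 -Maxmap_line hc; apply/q2_mono/sigmaT1_ge. Qed.

Lemma q1_1_le0 : qle Q (q1 1%VS) (q1 0%VS).
Proof.
have diag_le0 (i : 'I_2) : qle Q (q1 <[delta_mx i i]>%VS) (q1 0%VS).
  have e_le1 : qle Q (q1 <[delta_mx i i]>%VS) (q1 1%VS).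
    by have [v <-] := fdiag_delta_mx i; exact: q1_fdiag_le1.
  have i_neq := neq_lift i ord0.
  exact: qhom_Max_line_le0 hQ h1 _ _ _ (delta_mx_diag_factor i_neq)
    delta_mx_diag_annihilator e_le1.
apply: (qle_trans hQ _ _ (qhom_Max_add_le h1 (diag_le0 0) (diag_le0 1))).
apply: qhom_mono h1 _ _ _ _ => [U|]; first exact: subvv.
by rewrite /= -memvE M2_1_delta_mx; apply: memv_add; exact: memv_line.
Qed.

End FdiagSigmaCocone.
Arguments q2_mono {Q q2} h2 {I J}.
Arguments q1_1_le0 {Q q1 q2}.

Lemma fdiag_sigmaT_collapse :
  span_collapses_to (MaxQ C2) (MaxQ M2) (TQ C2) (Maxmap fdiag) (@sigmaT _ C2) 0%VS.
Proof.
move=> Q q1 q2 hQ h1 h2 hc.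
have q1_const := qhom_Max_const hQ h1 (q1_1_le0 hQ h1 h2 hc).
split=> [//|c]; apply: (qle_anti hQ).
  by have := q2_mono h2 (sigmaT1_ge c); rewrite -hc q1_const.
by have := q2_mono h2 (sigmaT0_le c); rewrite -hc q1_const.
Qed.

Theorem lemma3p7 :
  is_qpushout (MaxQ C2) (MaxQ M2) (TQ C2)
    (Maxmap fdiag) (@sigmaT _ C2) unitQ (fun _ => tt) (fun _ => tt) /\
  (forall (P : qstruct) (i1 : MaxQ M2 -> P) (i2 : TQ C2 -> P),
     is_qpushout (MaxQ C2) (MaxQ M2) (TQ C2)
       (Maxmap fdiag) (@sigmaT _ C2) P i1 i2 ->
     is_trivial_quantale P).
Proof.
split; first exact: (unitQ_qpushout Max_lub0 fdiag_sigmaT_collapse).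
exact: (qpushout_trivial Max_lub0 fdiag_sigmaT_collapse).
Qed.
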